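(* Let $n$ be odd and let $A$ be a latin square on the symbol set $\{0,\dots,n-1\}$ which is idempotent (the entry in row $x$, column $x$ is $x$) and commutative (the entry in row $x$, column $y$ equals the entry in row $y$, column $x$). Let $X=\{0,\dots,n-1\}\times\{0,1,2\}$ and let $S_{3n}$ be the Steiner latin square on $X$ associated with the Steiner triple system $S^1\cup S^2$, where $$S^1=\{\{(x,i),(y,i),(z,i+1 \bmod 3)\} : (x,y,z)\in A,\ x\ne y,\ i\in\{0,1,2\}\},\qquad S^2=\{\{(x,0),(x,1),(x,2)\}: x\in\{0,\dots,n-1\}\}.$$ For a transversal $T$ of $A$ define $T'\subseteq X^3$ as follows: for each $(a,b,c)\in T$ with $a\ne b$, put $((a,0),(b,0),(c,1)),\ ((a,1),(b,1),(c,2)),\ ((a,2),(b,2),(c,0))$ into $T'$; for each $(a,a,a)\in T$, put $((a,0),(a,1),(a,2)),\ ((a,1),(a,2),(a,0)),\ ((a,2),(a,0),(a,1))$ into $T'$. Then $T'$ is a transversal of $S_{3n}$, the map $T\mapsto T'$ is injective, and pairwise disjoint transversals of $A$ are mapped to pairwise disjoint transversals of $S_{3n}$.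
   Context: A latin square of order $m$ on a symbol set $Y$ with $|Y|=m$ is identified with a set of ordered triples $(r,c,s)\in Y^3$ meaning symbol $s$ is in row $r$, column $c$, such that each row and each column contains each symbol exactly once. A transversal is a set of $m$ entries containing exactly one entry from each row and each column, with no symbol repeated. A Steiner triple system (STS) on a set $Y$ is a set of $3$-element subsets of $Y$ such that every $2$-element subset of $Y$ lies in exactly one of them; $S^1\cup S^2$ above is an STS on $X$ (Bose's construction). The Steiner latin square of an STS on $Y$ is the latin square consisting of the triples $(a,a,a)$ for all $a\in Y$ together with all six ordered triples $(x,y,z)$ obtained by ordering each triple $\{x,y,z\}$ of the STS. *)

From mathcomp Require Import all_boot.
Set Implicit Arguments. Unset Strict Implicit. Unset Printing Implicit Defensive.

Section Defs.
Variable Y : finType.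

Definition latin_square (L : {set Y * Y * Y}) : Prop :=
  [/\ forall r c, #|[set t in L | (t.1.1 == r) && (t.1.2 == c)]| = 1,
      forall r s, #|[set t in L | (t.1.1 == r) && (t.2 == s)]| = 1 &
      forall c s, #|[set t in L | (t.1.2 == c) && (t.2 == s)]| = 1].

Definition ls_transversal (L T : {set Y * Y * Y}) : Prop :=
  [/\ T \subset L, #|T| = #|Y|,
      forall r, #|[set t in T | t.1.1 == r]| = 1,
      forall c, #|[set t in T | t.1.2 == c]| = 1 &
      {in T &, forall t u, t.2 = u.2 -> t = u}].

Definition steiner_ls (S : {set {set Y}}) : {set Y * Y * Y} :=
  [set t : Y * Y * Y |
     ((t.1.1 == t.1.2) && (t.1.2 == t.2))
     || ([set t.1.1; t.1.2; t.2] \in S) && (#|[set t.1.1; t.1.2; t.2]| == 3)].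
End Defs.

Section Bose.
Variable n : nat.
Definition i0 : 'I_3 := @inord 2 0.
Definition i1 : 'I_3 := @inord 2 1.
Definition i2 : 'I_3 := @inord 2 2.
Definition succ3 (i : 'I_3) : 'I_3 := @inord 2 ((i + 1) %% 3).

Definition Xn := ('I_n * 'I_3)%type.

Definition S1 (A : {set 'I_n * 'I_n * 'I_n}) : {set {set Xn}} :=
  [set [set ((t.1.1.1, t.2) : Xn); (t.1.1.2, t.2); (t.1.2, succ3 t.2)]
     | t in [set u : 'I_n * 'I_n * 'I_n * 'I_3 | (u.1 \in A) && (u.1.1.1 != u.1.1.2)]].

Definition S2 : {set {set Xn}} :=
  [set [set ((x, i0) : Xn); (x, i1); (x, i2)] | x : 'I_n].

Definition S3n (A : {set 'I_n * 'I_n * 'I_n}) : {set Xn * Xn * Xn} :=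
  steiner_ls (S1 A :|: S2).

Definition lift_entry (t : 'I_n * 'I_n * 'I_n) : {set Xn * Xn * Xn} :=
  let: (a, b, c) := t in
  if a != b then
    [set (((a, i0), (b, i0), (c, i1)) : Xn * Xn * Xn);
         ((a, i1), (b, i1), (c, i2)); ((a, i2), (b, i2), (c, i0))]
  else
    [set (((a, i0), (a, i1), (a, i2)) : Xn * Xn * Xn);
         ((a, i1), (a, i2), (a, i0)); ((a, i2), (a, i0), (a, i1))].

Definition Tprime (T : {set 'I_n * 'I_n * 'I_n}) : {set Xn * Xn * Xn} :=
  \bigcup_(t in T) lift_entry t.
End Bose.

From mathcomp Require Import all_boot ssralg zmodp.
Import GRing.Theory.

(** An entry [t = (a,b,c)] of [A] lifts to
    the three cells [((a,j), (b,j+d), (c,j+d+1))], [j : 'I_3], where [d] is [1]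
    on the diagonal and [0] elsewhere; this matches [lift_entry t] because
    idempotence and the latin property force diagonal entries to be [(a,a,a)].
    The map [(t,j) |-> lift] is injective, so [T'] has [3n] cells, and the cells
    of [T'] in row [(x,i)] (resp. column [(y,i)]) are in bijection with the
    entries of [T] in row [x] (resp. column [y]), by solving for [j].  Since
    [t \in T] can be read off any lift of [t] lying in [T'], the map [T |-> T']
    is injective and preserves disjointness. *)

Set Implicit Arguments.
Unset Strict Implicit.
Unset Printing Implicit Defensive.

Lemma card3 (T : finType) (x y z : T) :
  x != y -> x != z -> y != z -> #|[set x; y; z]| = 3.
Proof.
move=> xy xz yz; rewrite setUC cardsU1 cards2 xy !inE.
by rewrite negb_or ![z == _]eq_sym xz yz.
Qed.

Lemma card_imset_sep (aT rT : finType) (f : aT -> rT) (D : {set aT}) (P : pred rT) :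
  injective f -> #|[set u in f @: D | P u]| = #|[set x in D | P (f x)]|.
Proof.
move=> f_inj; rewrite -(card_imset _ f_inj).
suff -> : [set u in f @: D | P u] = f @: [set x in D | P (f x)] by [].
apply/setP => u; rewrite inE; apply/andP/imsetP => [[/imsetP[x Dx ->] Pfx]|[x]].
  by exists x; rewrite // inE Dx.
by rewrite inE => /andP[Dx Pfx] ->; rewrite imset_f.
Qed.

Lemma succ3E (j : 'I_3) : succ3 j = (j + 1)%R.
Proof. by apply/val_inj; rewrite /= inordK // ltn_mod. Qed.

Lemma addI3_1_neq (j : 'I_3) : (j + 1 != j)%R.
Proof. by case: j => [[|[|[|]]] ?]. Qed.

Lemma addI3_2_neq (j : 'I_3) : (j + 1 + 1 != j)%R.
Proof. by case: j => [[|[|[|]]] ?]. Qed.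

Lemma I3_orbit (j : 'I_3) : [set j; j + 1; j + 1 + 1]%R = [set: 'I_3].
Proof.
apply/eqP; rewrite eqEcard subsetT cardsT card_ord card3 //.
- by rewrite eq_sym addI3_1_neq.
- by rewrite eq_sym addI3_2_neq.
- by rewrite eq_sym addI3_1_neq.
Qed.

Lemma I3_enum : [set: 'I_3] = [set i0; i1; i2].
Proof.
rewrite -(I3_orbit i0) -!succ3E.
by congr [set _; _; _]; apply/val_inj; rewrite /= !inordK.
Qed.

Section BoseLift.
Variables (n : nat) (A : {set 'I_n * 'I_n * 'I_n}).
Hypotheses (A_latin : latin_square A) (A_idem : forall x, (x, x, x) \in A).
Implicit Types (t : 'I_n * 'I_n * 'I_n) (T : {set 'I_n * 'I_n * 'I_n}).

Definition diag_shift t : 'I_3 := ((t.1.1 == t.1.2)%:R)%R.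

Definition lift_cell t (j : 'I_3) : Xn n * Xn n * Xn n :=
  ((t.1.1, j), (t.1.2, j + diag_shift t), (t.2, j + diag_shift t + 1))%R.

Lemma lift_cell_inj : injective (uncurry lift_cell).
Proof. by move=> [[[a b] c] j] [[[a' b'] c'] j'] [-> -> -> _ -> _]. Qed.

Lemma diag_entry t : t \in A -> t.1.1 = t.1.2 -> t.2 = t.1.1.
Proof.
case: t => [[a b] c] At /= ab; subst b; case: A_latin => rowcol _ _.
have /card_le1_eqP/(_ (a, a, c) (a, a, a)) := eq_leq (rowcol a a).
by rewrite !inE At A_idem eqxx => /(_ isT isT) [].
Qed.

Lemma lift_entryE t : t \in A -> lift_entry t = [set lift_cell t j | j in [set: 'I_3]].
Proof.
move=> At; rewrite I3_enum imsetU imsetU1 !imset_set1.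
have [i01 i12 i20] : [/\ i0 + 1 = i1, i1 + 1 = i2 & i2 + 1 = i0]%R.
  by split; rewrite -succ3E; apply/val_inj; rewrite /= !inordK.
case: t At => [[a b] c] At; rewrite /lift_entry /lift_cell /diag_shift /=.
case: eqVneq => [ab|_]; last by rewrite !addr0 !(i01, i12, i20).
by subst b; have /= -> := diag_entry At erefl; rewrite !(i01, i12, i20).
Qed.

Lemma TprimeE T : T \subset A ->
  Tprime T = [set lift_cell t j | t in T, j in [set: 'I_3]].
Proof.
move=> sTA; apply/setP => u; apply/bigcupP/imset2P => [[t Tt]|[t j Tt _ ->]].
  by rewrite lift_entryE ?(subsetP sTA) // => /imsetP[j _ ->]; exists t j.
by exists t; rewrite // lift_entryE ?(subsetP sTA) // imset_f.
Qed.

Lemma mem_Tprime T t j : T \subset A -> (lift_cell t j \in Tprime T) = (t \in T).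
Proof.
move=> sTA; rewrite TprimeE // curry_imset2X.
by rewrite (mem_imset _ (t, j) lift_cell_inj) in_setX in_setT andbT.
Qed.

Lemma card_Tprime T : T \subset A -> #|Tprime T| = #|T| * 3.
Proof.
move=> sTA; rewrite TprimeE // curry_imset2X (card_imset _ lift_cell_inj).
by rewrite cardsX cardsT card_ord.
Qed.

Lemma card_Tprime_line T (pi : 'I_n * 'I_n * 'I_n -> 'I_n)
    (delta : 'I_n * 'I_n * 'I_n -> 'I_3) (coord : Xn n * Xn n * Xn n -> Xn n) x i :
  T \subset A -> (forall t j, coord (lift_cell t j) = (pi t, j + delta t)%R) ->
  #|[set u in Tprime T | coord u == (x, i)]| = #|[set t in T | pi t == x]|.
Proof.
move=> sTA coordE.
rewrite TprimeE // curry_imset2X card_imset_sep; last exact: lift_cell_inj.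
rewrite -(card_imset _ (_ : injective (fun t => (t, i - delta t)%R))); last by move=> ? ? [].
apply: eq_card => -[t j]; rewrite !inE /= coordE xpair_eqE andbT.
apply/idP/imsetP => [/and3P[Tt pit /eqP <-]|[t' + [-> ->]]].
  by exists t; rewrite ?addrK // inE Tt.
by rewrite inE subrK => /andP[-> ->]; rewrite eqxx.
Qed.

Lemma lift_cell_S3n t j : t \in A -> lift_cell t j \in S3n A.
Proof.
case: t => [[a b] c] At; rewrite inE /lift_cell /diag_shift /=; apply/orP; right.
have j1 : (j != j + 1)%R by rewrite eq_sym addI3_1_neq.
case: eqVneq => [ab|nab] /=.
  subst b; have /= -> := diag_entry At erefl.
  have -> : [set (a, j); (a, j + 1); (a, j + 1 + 1)]%R = [set (a, k) | k in [set: 'I_3]].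
    by rewrite -(I3_orbit j) imsetU imsetU1 !imset_set1.
  rewrite card_imset ?cardsT ?card_ord; last by move=> ? ? [].
  rewrite andbT inE; apply/orP; right; apply/imsetP; exists a => //.
  by rewrite I3_enum imsetU imsetU1 !imset_set1.
rewrite addr0 card3 ?xpair_eqE ?(negbTE nab) ?(negbTE j1) ?andbF //.
rewrite eqxx andbT inE.
by apply/orP; left; apply/imsetP; exists ((a, b, c), j); rewrite ?inE ?At ?nab ?succ3E.
Qed.

Lemma Tprime_transversal T : ls_transversal A T -> ls_transversal (S3n A) (Tprime T).
Proof.
case=> sTA cardT rowT colT symT; split.
- apply/subsetP => u; rewrite TprimeE // => /imset2P[t j Tt _ ->].
  exact/lift_cell_S3n/(subsetP sTA).
- by rewrite card_Tprime // cardT card_prod !card_ord.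
- move=> [x i]; rewrite (card_Tprime_line (pi := fun t => t.1.1) (delta := fun=> 0%R)
    (coord := fun u => u.1.1)) //.
  by move=> t j; rewrite addr0.
- by move=> [y i]; rewrite (card_Tprime_line (pi := fun t => t.1.2) (delta := diag_shift)
    (coord := fun u => u.1.2)).
- move=> u v; rewrite TprimeE // => /imset2P[t j Tt _ ->] /imset2P[t' j' Tt' _ ->].
  by move=> /eqP; rewrite xpair_eqE => /andP[/eqP/(symT _ _ Tt Tt') <- /eqP/addIr/addIr ->].
Qed.

End BoseLift.

Theorem mainTheorem3 (n : nat) (A : {set 'I_n * 'I_n * 'I_n}) :
  odd n ->
  latin_square A ->
  (forall x : 'I_n, (x, x, x) \in A) ->
  (forall x y z : 'I_n, (x, y, z) \in A -> (y, x, z) \in A) ->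
  [/\ forall T, ls_transversal A T -> ls_transversal (S3n A) (Tprime T),
      forall T1 T2, ls_transversal A T1 -> ls_transversal A T2 ->
        Tprime T1 = Tprime T2 -> T1 = T2 &
      forall T1 T2, ls_transversal A T1 -> ls_transversal A T2 ->
        [disjoint T1 & T2] -> [disjoint Tprime T1 & Tprime T2]].
Proof.
(* Oddness and commutativity are what make S^1 :|: S^2 a Steiner triple system;
   the transversal correspondence does not need them. *)
move=> _ A_latin A_idem _.
have subA T : ls_transversal A T -> T \subset A by case.
have mem_lift := mem_Tprime A_latin A_idem.
split.
- exact: Tprime_transversal.
- move=> T1 T2 /subA sT1 /subA sT2 E; apply/setP => t.
  by rewrite -(mem_lift _ t i0 sT1) E mem_lift.
- move=> T1 T2 /subA sT1 /subA sT2 T12.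
  rewrite disjoints_subset (TprimeE A_latin A_idem sT1).
  apply/subsetP => _ /imset2P[t j T1t _ ->].
  by rewrite inE mem_lift // (disjointFr T12 T1t).
Qed.
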